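(* Let $\Theta$ be a typed signature. For every $\varphi\in\mathcal L_{\mathrm{VCL}}(\Theta)$, if $\varphi$ is true at every state of every VCL model over $\Theta$, then $\vdash_{\mathrm{VCL}_\Theta}\varphi$.
   Context: A typed signature is $\Theta=(\mathrm{Ag},X,\{D_x\}_{x\in X})$ with $\mathrm{Ag}$ a finite non-empty set of agents, $X$ a finite set of variables, each $D_x$ finite non-empty. $\overline C=\mathrm{Ag}\setminus C$, $\Sigma_C=\prod_{i\in C}\Sigma_i$ ($\Sigma_\varnothing$ a singleton). $\mathcal L_{\mathrm{VCL}}(\Theta)$: $\varphi::=\top\mid(x{=}c)\mid\neg\varphi\mid\varphi\wedge\psi\mid[C]\varphi$ ($x\in X,c\in D_x,C\subseteq\mathrm{Ag}$). A VCL model is $\mathcal M=(S,\{\Sigma_i\},o,\pi)$ with $S,\Sigma_i\neq\varnothing$, $o:S\times\Sigma_{\mathrm{Ag}}\to S$, $\pi:S\to\prod_x D_x$; $(x{=}c)$ true at $s$ iff $\pi(s)(x)=c$; Boolean clauses usual; $[C]\varphi$ true at $s$ iff $\exists\alpha_C\in\Sigma_C\,\forall\beta_{\overline C}\in\Sigma_{\overline C}$: $\varphi$ true at $o(s,\alpha_C\sqcup\beta_{\overline C})$. The Hilbert system $\mathrm{VCL}_\Theta$ has: all instances of classical propositional tautologies; for $C,D\subseteq\mathrm{Ag}$: (C1) $[C](\varphi\wedge\psi)\to[C]\varphi$; (C2) $\neg[C]\bot$; (C3) $[C]\top$; (C4) $[C]\varphi\wedge[D]\psi\to[C\cup D](\varphi\wedge\psi)$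 when $C\cap D=\varnothing$; (C5) $\neg[\varnothing]\neg\varphi\to[\mathrm{Ag}]\varphi$; (V1) $\bigvee_{c\in D_x}(x{=}c)$; (V2) $(x{=}c)\to\neg(x{=}d)$ for distinct $c,d\in D_x$; rules MP and RE (from $\vdash\varphi\leftrightarrow\psi$ infer $\vdash[C]\varphi\leftrightarrow[C]\psi$). *)

From mathcomp Require Import all_boot.
Set Implicit Arguments. Unset Strict Implicit. Unset Printing Implicit Defensive.

Record signature := Signature {
  Ag : finType;
  Var : finType;
  Dom : Var -> finType;
  Ag_ne : 0 < #|Ag|;
  Dom_ne : forall x, 0 < #|Dom x|
}.

Section VCL.
Variable Th : signature.

Inductive form : Type :=
| fTop : form
| fEq : forall x : Var Th, @Dom Th x -> form
| fNeg : form -> form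
| fAnd : form -> form -> form
| fBox : {set Ag Th} -> form -> form.

Definition fBot := fNeg fTop.
Definition fOr p q := fNeg (fAnd (fNeg p) (fNeg q)).
Definition fImp p q := fNeg (fAnd p (fNeg q)).
Definition fIff p q := fAnd (fImp p q) (fImp q p).
Definition bigOr (l : seq form) := foldr fOr fBot l.
Definition varDisj (x : Var Th) := bigOr [seq fEq c | c <- enum (@Dom Th x)].

(* Instances of classical propositional tautologies: formulas true under every
   Boolean assignment to their maximal non-Boolean subformulas (atoms
   (x=c) and [C]phi). *)
Fixpoint peval (v : form -> bool) (p : form) : bool :=
  match p with
  | fTop => true
  | fNeg q => ~~ peval v q
  | fAnd q r => peval v q && peval v r
  | _ => v p
  end.
Definition taut_instance (p : form) := forall v, peval v p.

Inductive provable : form -> Prop :=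
| Ax_taut p : taut_instance p -> provable p
| Ax_C1 C p q : provable (fImp (fBox C (fAnd p q)) (fBox C p))
| Ax_C2 C : provable (fNeg (fBox C fBot))
| Ax_C3 C : provable (fBox C fTop)
| Ax_C4 C D p q : C :&: D = set0 ->
    provable (fImp (fAnd (fBox C p) (fBox D q)) (fBox (C :|: D) (fAnd p q)))
| Ax_C5 p : provable (fImp (fNeg (fBox set0 (fNeg p))) (fBox setT p))
| Ax_V1 x : provable (varDisj x)
| Ax_V2 x (c d : @Dom Th x) : c != d -> provable (fImp (fEq c) (fNeg (fEq d)))
| R_MP p q : provable p -> provable (fImp p q) -> provable q
| R_RE C p q : provable (fIff p q) -> provable (fIff (fBox C p) (fBox C q)).

Record model := Model {
  St : Type;
  Strat : Ag Th -> Type;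
  St_ne : inhabited St;
  Strat_ne : forall i, inhabited (Strat i);
  out : St -> (forall i, Strat i) -> St;
  val : St -> forall x : Var Th, @Dom Th x
}.

Definition join (M : model) (C : {set Ag Th})
  (a : forall i, i \in C -> Strat M i) (b : forall i, i \notin C -> Strat M i)
  : forall i, Strat M i :=
  fun i => match boolP (i \in C) with
           | AltTrue h => a i h
           | AltFalse h => b i h
           end.

Fixpoint sat (M : model) (s : St M) (p : form) : Prop :=
  match p with
  | fTop => True
  | fEq x c => val s x = c
  | fNeg q => ~ @sat M s q
  | fAnd q r => @sat M s q /\ @sat M s r
  | fBox C q => exists a : (forall i, i \in C -> Strat M i),
                 forall b : (forall i, i \notin C -> Strat M i),
                   @sat M (out s (join a b)) q
  end.

Definition valid (p : form) := forall (M : model) (s : St M), @sat M s p.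
End VCL.

From mathcomp Require Import all_boot.
From Stdlib Require Import Classical ClassicalEpsilon FunctionalExtensionality.
Set Implicit Arguments. Unset Strict Implicit. Unset Printing Implicit Defensive.

(* Completeness via a canonical model over the subformula closure of phi.
   States are atoms, i.e. Boolean assignments A to the closure, read as the
   conjunction delta_A of the corresponding literals.  A strategy is a proposal
   (D, psi) together with a number.  A nonempty D all of whose members propose
   D is an agreement at G if G derives [D] of their conjoined goals; by C4 the
   (disjoint) agreements jointly enforce the conjunction Psi of all agreed
   goals.  The successors of G are the atoms A such that G does not derive
   [empty](~(Psi /\ delta_A)), and the outcome is the successor indexed by the
   sum of all numbers modulo their count.  If G derives [C]q, the members of C
   propose (C, q) and every successor satisfies q.  Conversely, an agent
   outside a proper coalition C can steer the outcome to any successor with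
   its number, so if [C]q held without being derivable some successor would
   refute q; for C = Ag this role is played by C5. *)

Ltac taut := let v := fresh "v" in move=> v; rewrite /= ?/fBot /=;
  repeat match goal with
  | |- context [peval ?v ?p] => case: (peval v p)
  | |- context [?v (fBox ?C ?p)] => case: (v (fBox C p))
  end; done.

Section Hilbert.
Variable Th : signature.
Notation form := (form Th).
Implicit Types (p q r G : form) (v : form -> bool) (l : seq form).

Definition bigAnd l := foldr (@fAnd Th) (@fTop Th) l.

Lemma peval_bigAnd v l : peval v (bigAnd l) = all (peval v) l.
Proof. by elim: l => //= p l ->. Qed.

Lemma peval_bigOr v l : peval v (bigOr l) = has (peval v) l.
Proof. by elim: l => //= p l ->; case: (peval v p); case: has. Qed.

Lemma taut_bigAnd_mem (T : eqType) (f : T -> form) s x :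
  x \in s -> taut_instance (fImp (bigAnd (map f s)) (f x)).
Proof.
move=> xs v /=; rewrite peval_bigAnd all_map.
by case H: all => //=; move/allP: H => /(_ x xs) /= ->.
Qed.

Lemma taut_bigAnd_const (T : Type) (s : seq T) q :
  taut_instance (fImp q (bigAnd (map (fun=> q) s))).
Proof.
move=> v /=; rewrite peval_bigAnd all_map; case E: (peval v q) => //=.
by rewrite negbK; elim: s => //= _ s ->; rewrite E.
Qed.

Lemma taut_bigAnd_neg (T : Type) (f : T -> form) (s : seq T) :
  taut_instance (fImp (bigAnd [seq fNeg (f x) | x <- s]) (fNeg (bigOr (map f s)))).
Proof.
move=> v /=; rewrite peval_bigAnd peval_bigOr.
by elim: s => //= x s; case: (peval v (f x)); case: all; case: has.
Qed.

Lemma taut_MP p q : provable p -> taut_instance (fImp p q) -> provable q.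
Proof. by move=> hp ht; apply: R_MP hp (Ax_taut ht). Qed.

Lemma taut_MP2 p q r : provable p -> provable q ->
  taut_instance (fImp p (fImp q r)) -> provable r.
Proof. by move=> hp hq ht; apply: R_MP hq _; apply: taut_MP hp ht. Qed.

Lemma taut_MP3 p q r s : provable p -> provable q -> provable r ->
  taut_instance (fImp p (fImp q (fImp r s))) -> provable s.
Proof. by move=> hp hq hr ht; apply: R_MP hr _; apply: taut_MP2 hp hq ht. Qed.

Lemma provable_bigAnd (T : Type) (f : T -> form) (s : seq T) :
  (forall x, provable (f x)) -> provable (bigAnd (map f s)).
Proof.
move=> h; elim: s => [|x s ih] /=; first by apply: Ax_taut.
by apply: taut_MP2 (h x) ih _; taut.
Qed.

Lemma box_mono C p q : provable (fImp p q) -> provable (fImp (fBox C p) (fBox C q)).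
Proof.
move=> hpq; have /(R_RE C) hRE : provable (fIff p (fAnd q p)) by apply: taut_MP hpq _; taut.
by apply: taut_MP2 hRE (Ax_C1 C q p) _; taut.
Qed.

Definition derives G p := provable (fImp G p).
Definition consistent G := ~ provable (fNeg G).

Lemma derives_provable G p : provable p -> derives G p.
Proof. by move=> hp; apply: taut_MP hp _; taut. Qed.

Lemma derives_MP G p q : derives G p -> provable (fImp p q) -> derives G q.
Proof. by move=> hp hpq; apply: taut_MP2 hp hpq _; taut. Qed.

Lemma derives_MP2 G p q r :
  derives G p -> derives G q -> provable (fImp p (fImp q r)) -> derives G r.
Proof. by move=> hp hq hpqr; apply: taut_MP3 hp hq hpqr _; taut. Qed.

Lemma derives_bigAnd (T : Type) (f : T -> form) (s : seq T) G :
  (forall x, derives G (f x)) -> derives G (bigAnd (map f s)).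
Proof.
move=> h; elim: s => [|x s ih] /=; first by apply: derives_provable; apply: Ax_taut.
by apply: derives_MP2 (h x) ih _; apply: Ax_taut; taut.
Qed.

Lemma consistent_contra G p : consistent G -> derives G p -> derives G (fNeg p) -> False.
Proof. by move=> hG hp hnp; apply: hG; apply: taut_MP2 hp hnp _; taut. Qed.

Lemma derives_C4 G (C D : {set Ag Th}) p q : C :&: D = set0 ->
  derives G (fBox C p) -> derives G (fBox D q) -> derives G (fBox (C :|: D) (fAnd p q)).
Proof. by move=> CD hp hq; apply: derives_MP2 hp hq _; apply: taut_MP (Ax_C4 p q CD) _; taut. Qed.

Lemma derives_box_mono G C p q :
  derives G (fBox C p) -> provable (fImp p q) -> derives G (fBox C q).
Proof. by move=> hp /(box_mono C); apply: derives_MP hp. Qed.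

Lemma derives_box_provable G C p : provable p -> derives G (fBox C p).
Proof.
move=> hp; apply: derives_box_mono (derives_provable G (Ax_C3 C)) _.
by apply: taut_MP hp _; taut.
Qed.

Lemma derives_box_subset G (C D : {set Ag Th}) p :
  C \subset D -> derives G (fBox C p) -> derives G (fBox D p).
Proof.
move=> CD hp; have CDC : C :&: (D :\: C) = set0 by rewrite setDE setICA setICr setI0.
have := derives_C4 CDC hp (derives_provable G (Ax_C3 (D :\: C))).
have -> : C :|: (D :\: C) = D by rewrite -{2}(setID D C) (setIidPr CD).
move=> /derives_box_mono; apply; apply: Ax_taut; taut.
Qed.

Lemma derives_box0_bigAnd (T : Type) (f : T -> form) (s : seq T) G :
  (forall x, derives G (fBox set0 (f x))) -> derives G (fBox set0 (bigAnd (map f s))).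
Proof.
move=> h; elim: s => [|x s ih] /=; first exact: derives_provable (Ax_C3 _).
by have := derives_C4 (setI0 _) (h x) ih; rewrite setU0.
Qed.

Lemma consistent_not_box_bot G C : consistent G -> derives G (fBox C (@fBot Th)) -> False.
Proof. by move=> hG hbot; apply: consistent_contra hG hbot (derives_provable G (Ax_C2 C)). Qed.

End Hilbert.

Lemma In_nth (T : Type) (x0 x : T) (s : seq T) :
  List.In x s -> exists2 k, k < size s & nth x0 s k = x.
Proof. by elim: s => //= y s ih [-> | /ih [k ks <-]]; [exists 0 | exists k.+1]. Qed.

Lemma exists_modn_addr s k R : 0 < s -> k < s -> exists T, (T + R) %% s = k.
Proof.
move=> s_gt0 ks; exists (k + (R * s - R)).
by rewrite -addnA subnK ?leq_pmulr // addnC modnMDl modn_small.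
Qed.

Definition classicb (P : Prop) : bool := if excluded_middle_informative P then true else false.

Lemma classicbE (P : Prop) : classicb P <-> P.
Proof. by rewrite /classicb; case: excluded_middle_informative. Qed.

Fixpoint subforms Th (p : form Th) : seq (form Th) := p :: match p with
  | fNeg q | fBox _ q => subforms q
  | fAnd q r => subforms q ++ subforms r
  | _ => [::]
  end.

Lemma subforms_self Th (p : form Th) : List.In p (subforms p).
Proof. by case: p => *; left. Qed.

Lemma subforms_trans Th (p q r : form Th) :
  List.In q (subforms p) -> List.In r (subforms q) -> List.In r (subforms p).
Proof.
elim: p => [|x c|p ih|p ihp p' ihp'|C p ih] /= [<- // | hq] hr; right => //.
- exact: ih.
- apply/List.in_or_app; case: (List.in_app_or _ _ _ hq) => {}hq.
    by left; apply: ihp.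
  by right; apply: ihp'.
- exact: ih.
Qed.

Section Join.
Variables (Th : signature) (M : model Th) (C : {set Ag Th}).
Variables (a : forall i, i \in C -> Strat M i) (b : forall i, i \notin C -> Strat M i).

Lemma join_inE i (iC : i \in C) : join a b i = a iC.
Proof.
rewrite /join; case: {-}_ / boolP => h; first by rewrite (bool_irrelevance h iC).
by exfalso; move: h; rewrite iC.
Qed.

Lemma join_outE i (iC : i \notin C) : join a b i = b iC.
Proof.
rewrite /join; case: {-}_ / boolP => h; last by rewrite (bool_irrelevance h iC).
by exfalso; move: iC; rewrite h.
Qed.

End Join.

Section Canonical.
Variables (Th : signature) (phi0 : form Th).
Notation form := (form Th).
Implicit Types (p q : form) (v : form -> bool).

Definition closure := subforms phi0.
Definition atom := {ffun 'I_(size closure) -> bool}.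
Definition lit (b : bool) p := if b then p else fNeg p.
Definition atom_form (A : atom) :=
  bigAnd [seq lit (A k) (nth (fTop Th) closure k) | k <- enum 'I_(size closure)].

Local Notation der A := (derives (atom_form A)).
Local Notation cons A := (consistent (atom_form A)).

Lemma atom_decides A p : List.In p closure -> der A p \/ der A (fNeg p).
Proof.
case/(In_nth (fTop Th)) => k lt_k <-.
have kP : Ordinal lt_k \in enum 'I_(size closure) by rewrite mem_enum.
have := taut_bigAnd_mem (fun k => lit (A k) (nth (fTop Th) closure k)) kP.
by rewrite /lit; case: (A _) => /Ax_taut; [left | right].
Qed.

Definition atom_of v : atom := [ffun k : 'I_(size closure) => peval v (nth (fTop Th) closure k)].

Lemma peval_atom_of v : peval v (atom_form (atom_of v)).
Proof.
rewrite peval_bigAnd all_map; apply/allP => k _ /=; rewrite ffunE /lit.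
by case E: (peval v (nth _ closure k)) => /=; rewrite E.
Qed.

Lemma taut_atom_cases p q :
  taut_instance (fImp (bigAnd [seq fImp (fAnd p (atom_form A)) q | A <- enum {: atom}]) (fImp p q)).
Proof.
move=> v /=; rewrite peval_bigAnd all_map.
case H: all => //=; move/allP: H => /(_ (atom_of v)); rewrite mem_enum => /(_ isT) /=.
by rewrite peval_atom_of; case: (peval v p); case: (peval v q).
Qed.

Lemma derives_box0_atom_cases G p q :
  (forall A, derives G (fBox set0 (fImp (fAnd p (atom_form A)) q))) ->
  derives G (fBox set0 (fImp p q)).
Proof.
move=> h; apply: derives_box_mono (derives_box0_bigAnd (enum {: atom}) h) _.
exact: Ax_taut (taut_atom_cases p q).
Qed.

Lemma refuting_atom p : List.In p closure -> ~ provable p -> exists A, cons A /\ der A (fNeg p).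
Proof.
move=> hp np; apply: NNPP => hn; apply: np.
have h A : provable (fImp (fAnd (fTop Th) (atom_form A)) p).
  case: (classic (cons A)) => [hA | /NNPP hA]; last by apply: taut_MP hA _; taut.
  case: (atom_decides A hp) => [hpA | hnA]; last by case: hn; exists A.
  by apply: taut_MP hpA _; taut.
have := taut_MP (provable_bigAnd _ h) (taut_atom_cases (fTop Th) p).
by move/taut_MP; apply; taut.
Qed.

Definition proposal := ({set Ag Th} * form)%type.
Definition strategy := (proposal * nat)%type.
Definition idle_strategy : strategy := ((set0, fTop Th), 0).
Definition proposals (s : Ag Th -> strategy) i := (s i).1.

Implicit Types (G A : atom) (g : Ag Th -> proposal) (C D : {set Ag Th}).

Definition goals g D := bigAnd [seq (g i).2 | i <- enum D].
Definition agreement G g D :=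
  [/\ D != set0, forall i, i \in D -> (g i).1 = D & der G (fBox D (goals g D))].
Definition agreements G g := [seq D <- enum {: {set Ag Th}} | classicb (agreement G g D)].
Definition agreed_goal G g := bigAnd [seq goals g D | D <- agreements G g].
Definition agreeing G g := \bigcup_(D <- agreements G g) D.
Definition successors G g := [seq A <- enum {: atom} |
  classicb (~ der G (fBox set0 (fNeg (fAnd (agreed_goal G g) (atom_form A)))))].
Definition outcome G (s : Ag Th -> strategy) : atom :=
  let S := successors G (proposals s) in nth G S ((\sum_i (s i).2) %% size S).

Lemma inhabited_Dom (x : Var Th) : inhabited (Dom x).
Proof. by case/card_gt0P: (Dom_ne x) => d _; exists. Qed.

(* For an inconsistent G the predicate may be empty and [epsilon] returns junk;
   only consistent atoms matter below. *)
Definition valuation G (x : Var Th) : Dom x :=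
  epsilon (inhabited_Dom x) (fun d => ~ der G (fNeg (fEq d))).

Definition canonical_model : model Th :=
  @Model Th atom (fun=> strategy) (inhabits [ffun=> false]) (fun=> inhabits idle_strategy)
    outcome valuation.

Lemma mem_agreements G g D : D \in agreements G g <-> agreement G g D.
Proof. by rewrite mem_filter mem_enum andbT classicbE. Qed.

Lemma agreements_disjoint G g D D' : agreement G g D -> agreement G g D' ->
  D != D' -> D :&: D' = set0.
Proof.
case=> _ hD _ [_ hD' _] neqD; apply/setP => i; rewrite !inE.
by apply/negP => /andP[/hD eD /hD' eD']; rewrite -eD -eD' eqxx in neqD.
Qed.

Lemma derives_box_agreed G g : der G (fBox (agreeing G g) (agreed_goal G g)).
Proof.
rewrite /agreeing /agreed_goal.
have : forall D, D \in agreements G g -> agreement G g D by move=> D /mem_agreements.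
have : uniq (agreements G g) by apply/filter_uniq/enum_uniq.
elim: agreements => [|D l ih] /=.
  by rewrite big_nil => _ _; apply: derives_provable (Ax_C3 _).
case/andP=> Dl ul hl; rewrite big_cons.
have hD : agreement G g D by apply: hl; rewrite mem_head.
have {}hl D' : D' \in l -> agreement G g D' by move=> D'l; apply: hl; rewrite in_cons D'l orbT.
have [_ _ hDbox] := hD.
apply: derives_C4 hDbox (ih ul hl).
apply/setP => i; rewrite inE in_set0 bigcup_seq; apply/andP => -[iD /bigcupP[D' D'l iD']].
have neqD : D != D' by apply: contraNneq Dl => ->.
have /setP/(_ i) := agreements_disjoint hD (hl D' D'l) neqD.
by rewrite inE iD iD' in_set0.
Qed.

Lemma agreeing_subset G g C : (forall i, i \notin C -> (g i).1 = set0) -> agreeing G g \subset C.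
Proof.
move=> hg; apply/subsetP => i; rewrite /agreeing bigcup_seq.
case/bigcupP => D /mem_agreements[D0 hD _] iD.
by apply: contraNT D0 => /hg; rewrite hD // => ->.
Qed.

Lemma agreed_goal_implies G g D i : D \in agreements G g -> i \in D ->
  provable (fImp (agreed_goal G g) (g i).2).
Proof.
move=> /(taut_bigAnd_mem (goals g)) hD iD.
have /(taut_bigAnd_mem (fun i => (g i).2)) hi : i \in enum D by rewrite mem_enum.
by apply: taut_MP2 (Ax_taut hD) (Ax_taut hi) _; rewrite /goals; taut.
Qed.

Lemma mem_successors G g A :
  A \in successors G g <-> ~ der G (fBox set0 (fNeg (fAnd (agreed_goal G g) (atom_form A)))).
Proof. by rewrite mem_filter mem_enum andbT classicbE. Qed.

Lemma derives_box_successors G g q : (forall A, A \in successors G g -> der A q) ->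
  der G (fBox (agreeing G g) q).
Proof.
move=> hS; have h A : der G (fBox set0 (fImp (fAnd (agreed_goal G g) (atom_form A)) q)).
  case: (boolP (A \in successors G g)) => [/hS hA | /negP nA].
    by apply: derives_box_provable; apply: taut_MP hA _; taut.
  have /NNPP hA : ~ ~ der G (fBox set0 (fNeg (fAnd (agreed_goal G g) (atom_form A)))).
    by move/mem_successors.
  by apply: derives_box_mono hA _; apply: Ax_taut; taut.
have := derives_C4 (setI0 _) (derives_box_agreed G g) (derives_box0_atom_cases h).
by rewrite setU0 => /derives_box_mono; apply; apply: Ax_taut; taut.
Qed.

Lemma successors_nonempty G g : cons G -> 0 < size (successors G g).
Proof.
move=> hG; case E: successors => [|A l] //; exfalso.
by apply: (consistent_not_box_bot hG); apply: (derives_box_successors (g := g)) => A; rewrite E.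
Qed.

Section Successor.
Variables (G A : atom) (g : Ag Th -> proposal).
Hypothesis succA : A \in successors G g.

Lemma successor_compatible : ~ provable (fNeg (fAnd (agreed_goal G g) (atom_form A))).
Proof. by move=> hp; apply: (proj1 (mem_successors G g A) succA); apply: derives_box_provable. Qed.

Lemma successor_consistent : cons A.
Proof. by move=> hp; apply: successor_compatible; apply: taut_MP hp _; taut. Qed.

Lemma successor_derives q : List.In q closure ->
  provable (fImp (agreed_goal G g) q) -> der A q.
Proof.
move=> hq hgq; case: (atom_decides A hq) => // hnq; exfalso.
by apply: successor_compatible; apply: taut_MP2 hnq hgq _; taut.
Qed.

Lemma successor_box0N q : der G (fBox set0 (fNeg q)) -> ~ der A q.
Proof.
move=> hnq hq; apply: (proj1 (mem_successors G g A) succA).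
by apply: derives_box_mono hnq _; apply: taut_MP hq _; taut.
Qed.

Lemma successor_box0 q : List.In q closure -> der G (fBox set0 q) -> der A q.
Proof.
move=> hq hbq; case: (atom_decides A hq) => // hnq; exfalso.
by apply: (successor_box0N (q := fNeg q)) hnq; apply: derives_box_mono hbq _; apply: Ax_taut; taut.
Qed.

End Successor.

Lemma mem_outcome G s : cons G -> outcome G s \in successors G (proposals s).
Proof. by move=> hG; apply: mem_nth; rewrite ltn_pmod // successors_nonempty. Qed.

Lemma valuation_consistent G x : cons G -> ~ der G (fNeg (fEq (valuation G x))).
Proof.
move=> hG; apply: (epsilon_spec (inhabited_Dom x) (fun d => ~ der G (fNeg (fEq d)))).
apply: NNPP => hn; have hnx (d : Dom x) : der G (fNeg (fEq d)).
  by apply: NNPP => nd; apply: hn; exists d.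
apply: (consistent_contra hG (derives_provable _ (Ax_V1 x))).
exact: derives_MP (derives_bigAnd (enum (Dom x)) hnx) (Ax_taut (taut_bigAnd_neg _ _)).
Qed.

Local Notation cm_join := (@join Th canonical_model).
Local Notation holds A p := (@sat Th canonical_model A p).

Definition idle C : forall i, i \notin C -> strategy := fun _ _ => idle_strategy.
Arguments idle : clear implicits.

Lemma outcome_steerable G C (a : forall i, i \in C -> strategy) j A :
  cons G -> j \notin C -> A \in successors G (proposals (cm_join a (idle C))) ->
  exists b, outcome G (cm_join a b) = A.
Proof.
move=> hG jC hA; set s := cm_join a (idle C).
pose R := \sum_(i | i != j) (s i : strategy).2.
set S := successors G (proposals s).
have [T eT] : exists T, (T + R) %% size S = index A S.
  by apply: exists_modn_addr; [apply: successors_nonempty | rewrite index_mem].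
pose b i (_ : i \notin C) : strategy := if i == j then ((set0, fTop Th), T) else idle_strategy.
have eprop : proposals (cm_join a b) = proposals s.
  apply: functional_extensionality => i; rewrite /proposals /s.
  case: (boolP (i \in C)) => iC; first by rewrite !(join_inE _ _ iC).
  by rewrite !(join_outE _ _ iC) /b /idle; case: eqP.
have esum : \sum_i (cm_join a b i : strategy).2 = T + R.
  rewrite (bigD1 j) //= (join_outE _ _ jC) /b eqxx; congr (_ + _); apply: eq_bigr => i nij.
  case: (boolP (i \in C)) => iC; first by rewrite /s !(join_inE _ _ iC).
  by rewrite /s !(join_outE _ _ iC) /b /idle (negbTE nij).
by exists b; rewrite /outcome eprop esum eT nth_index.
Qed.

Definition truthful q := forall A, cons A -> (holds A q <-> der A q).

Lemma holds_box_setT G q : truthful q -> List.In (fBox setT q) closure -> cons G ->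
  holds G (fBox setT q) -> der G (fBox setT q).
Proof.
move=> tq hin hG [a ha]; case: (atom_decides G hin) => // hn; exfalso.
have hbox : der G (fBox set0 (fNeg q)).
  by apply: derives_MP2 hn (derives_provable _ (Ax_C5 q)) _; apply: Ax_taut; taut.
have hA := mem_outcome (cm_join a (idle setT)) hG.
by apply: (successor_box0N hA hbox); apply/(tq _ (successor_consistent hA)); apply: ha.
Qed.

Lemma holds_box_proper G C q : truthful q -> C != setT -> cons G ->
  holds G (fBox C q) -> der G (fBox C q).
Proof.
move=> tq nC hG [a ha]; apply: NNPP => nd.
have /subsetPn[j _ jC] : ~~ (setT \subset C) by rewrite subTset.
set g := proposals (cm_join a (idle C)).
have [A hA nqA] : exists2 A, A \in successors G g & ~ der A q.
  apply: NNPP => hn; apply: nd; apply: derives_box_subset (derives_box_successors (g := g) _).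
    by apply: agreeing_subset => i iC; rewrite /g /proposals (join_outE _ _ iC).
  by move=> A hA; apply: NNPP => nA; apply: hn; exists A.
have [b eb] := outcome_steerable hG jC hA.
by apply/nqA/(tq _ (successor_consistent hA)); rewrite -eb; apply: ha.
Qed.

Lemma derives_holds_box G C q : truthful q -> List.In q closure -> cons G ->
  der G (fBox C q) -> holds G (fBox C q).
Proof.
move=> tq hq hG hCq; exists (fun i _ => ((C, q), 0)) => b.
set s := cm_join _ b; have hA := mem_outcome s hG.
apply/(tq _ (successor_consistent hA)).
case: (set_0Vmem C) => [C0 | [i0 i0C]].
  by rewrite C0 in hCq; exact: (successor_box0 hA hq hCq).
apply: (successor_derives hA hq).
have hs i : i \in C -> proposals s i = (C, q).
  by move=> iC; rewrite /proposals /s (join_inE _ _ iC).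
have hagr : C \in agreements G (proposals s).
  apply/mem_agreements; split; [by apply/set0Pn; exists i0 | by move=> i /hs-> | ].
  apply: derives_box_mono hCq _; rewrite /goals.
  have -> : [seq (proposals s i).2 | i <- enum C] = [seq q | _ <- enum C].
    by apply/eq_in_map => i; rewrite mem_enum => /hs ->.
  exact: Ax_taut (taut_bigAnd_const _ _).
by have := agreed_goal_implies hagr i0C; rewrite hs.
Qed.

Lemma truth p : List.In p closure -> truthful p.
Proof.
elim: p => [|x c|q ih|q1 ih1 q2 ih2|C q ih] hin A hA /=.
- by split=> // _; apply: derives_provable; apply: Ax_taut.
- split=> [e | hc].
    by case: (atom_decides A hin) => // hn; rewrite -e in hn; case: (valuation_consistent hA hn).
  apply/eqP/negPn/negP => ne; apply: (valuation_consistent (x := x) hA).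
  by apply: derives_MP hc (Ax_V2 _); rewrite eq_sym.
- have hq := subforms_trans hin (or_intror (subforms_self q)).
  rewrite (ih hq A hA); split=> [nq | hnq hq']; first by case: (atom_decides A hq).
  exact: consistent_contra hA hq' hnq.
- have hq1 := subforms_trans hin (or_intror (List.in_or_app _ _ _ (or_introl (subforms_self q1)))).
  have hq2 := subforms_trans hin (or_intror (List.in_or_app _ _ _ (or_intror (subforms_self q2)))).
  rewrite (ih1 hq1 A hA) (ih2 hq2 A hA); split=> [[h1 h2] | h].
    by apply: derives_MP2 h1 h2 _; apply: Ax_taut; taut.
  by split; apply: derives_MP h _; apply: Ax_taut; taut.
- have hq := subforms_trans hin (or_intror (subforms_self q)).
  split; last exact: derives_holds_box (ih hq) hq hA.
  case: (eqVneq C setT) => [eC | nC]; last exact: holds_box_proper (ih hq) nC hA.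
  by rewrite eC in hin *; apply: holds_box_setT (ih hq) hin hA.
Qed.

End Canonical.

Theorem mainTheorem9 (Th : signature) (phi : form Th) :
  valid phi -> provable phi.
Proof.
move=> hv; apply: NNPP => np.
have hin := subforms_self phi.
have [A [hA hnA]] := refuting_atom hin np.
have /(truth hin hA) hpA := hv (canonical_model phi) A.
exact: consistent_contra hA hpA hnA.
Qed.
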